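(* Let $\mathcal{X}=(X,\{R_i\}_{i=0}^d)$ be an association scheme with adjacency matrices $A_0,\dots,A_d$, valencies $k_0,\dots,k_d$ and intersection numbers $p_{ij}^k$, and let $W=\sum_{i=0}^dw_iA_i$ and $W'=\sum_{i=0}^dw'_iA_i$ be type-II matrices in its Bose--Mesner algebra. Suppose that $w_0,\dots,w_d$ are pairwise distinct and $w'_0,\dots,w'_d$ are pairwise distinct, that the valencies $k_0,\dots,k_d$ are pairwise distinct, and that $\min\{p_{11}^i\mid 0<i\leq d\}>\frac{|X|}{2}$. If $W$ and $W'$ are equivalent, then $W$ is a scalar multiple of $W'$.
   Context: An association scheme $(X,\{R_i\}_{i=0}^d)$ is a partition of $X\times X$ into relations $R_0=\{(x,x)\}$, $R_1,\dots,R_d$ such that for $(x,y)\in R_k$ the number $p_{ij}^k=|\{z:(x,z)\in R_i,(z,y)\in R_j\}|$ depends only on $i,j,k$ (and each transpose $R_i^\top$ is some $R_j$); $A_i$ is the $(0,1)$-matrix of $R_i$, the Bose--Mesner algebra is the span of the $A_i$, and the valency $k_i$ is the number of $y$ with $(x,y)\in R_i$ for any fixed $x$. A type-II matrix is an $n\times n$ matrix $W$ ($n=|X|$) with nonzero complex entries such that $W(W^{(-)})^\top=nI$, $W^{(-)}$ the entrywise inverse. $W,W'$ are equivalent if there exist invertible diagonal matrices $D,D'$ and permutation matrices $T,T'$ with $DWD'=TW'T'$. *)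

From mathcomp Require Import all_boot all_order all_algebra all_fingroup.
Set Implicit Arguments. Unset Strict Implicit. Unset Printing Implicit Defensive.
Import GRing.Theory Num.Theory.
Local Open Scope ring_scope.

(* An association scheme on X = 'I_n with classes 0..d is encoded by the
   relation-index function rel : 'I_n -> 'I_n -> 'I_d.+1, where
   (x,y) \in R_i  <->  rel x y = i. *)
Definition pij {n d : nat} (rel : 'I_n -> 'I_n -> 'I_d.+1) (i j : 'I_d.+1)
  (x y : 'I_n) : nat :=
  #|[set z : 'I_n | (rel x z == i) && (rel z y == j)]|.

Definition valency_at {n d : nat} (rel : 'I_n -> 'I_n -> 'I_d.+1) (i : 'I_d.+1)
  (x : 'I_n) : nat := #|[set y : 'I_n | rel x y == i]|.

Definition is_assoc_scheme {n d : nat} (rel : 'I_n -> 'I_n -> 'I_d.+1) : Prop :=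
  (* each R_i is nonempty (it is a partition into d+1 classes) *)
  (forall i : 'I_d.+1, exists x y, rel x y = i) /\
  (forall x y, (rel x y == ord0) = (x == y)) /\
  (forall i : 'I_d.+1, exists j : 'I_d.+1, forall x y, rel x y = i -> rel y x = j) /\
  (forall i j k x y x' y', rel x y = k -> rel x' y' = k ->
      pij rel i j x y = pij rel i j x' y').

Definition adj_mx {C : pzRingType} {n d : nat} (rel : 'I_n -> 'I_n -> 'I_d.+1)
  (i : 'I_d.+1) : 'M[C]_n := \matrix_(x, y) (rel x y == i)%:R.

Definition bm_elt {C : pzRingType} {n d : nat} (rel : 'I_n -> 'I_n -> 'I_d.+1)
  (w : 'I_d.+1 -> C) : 'M[C]_n := \sum_(i < d.+1) w i *: adj_mx rel i.

Definition type_II {C : fieldType} {n : nat} (W : 'M[C]_n) : Prop :=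
  (forall x y, W x y != 0) /\
  W *m (map_mx (fun a => a^-1) W)^T = (n%:R)%:M.

Definition type_II_equiv {C : fieldType} {n : nat} (W W' : 'M[C]_n) : Prop :=
  exists (dl dr : 'rV[C]_n) (s t : 'S_n),
    (forall k, dl 0 k != 0) /\ (forall k, dr 0 k != 0) /\
    diag_mx dl *m W *m diag_mx dr = perm_mx s *m W' *m perm_mx t.

From mathcomp Require Import all_boot all_order all_algebra all_fingroup.
From mathcomp Require Import zify.
Import GRing.Theory Num.Theory.
Local Open Scope ring_scope.

(* Distinct valencies force the scheme to be symmetric, since R_i and its
   transpose have the same valency.  Write D W D' = T W' T' entrywise as
   D_x W_xy D'_y = W'_(s x)(t y).  For x != y the common R_1-neighbours of x
   and y, and those of s x and s y pulled back along t, are two sets of size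
   > n/2, so they share some z; comparing the entries at (x,z) and (y,z) shows
   that D is scalar.  Then a column of W' is a permuted column of W scaled by
   a constant c, so the value c w_i occurs exactly k_i times in a column of W';
   as the valencies are distinct, that value must be w'_i. *)

Lemma bm_eltE (C : pzRingType) n d (rel : 'I_n -> 'I_n -> 'I_d.+1)
  (w : 'I_d.+1 -> C) x y : bm_elt rel w x y = w (rel x y).
Proof.
rewrite /bm_elt summxE (bigD1 (rel x y)) //= big1 ?addr0.
  by rewrite !mxE eqxx mulr1.
by move=> i /negbTE Hi; rewrite !mxE eq_sym Hi mulr0.
Qed.

Lemma diag_perm_equivE (R : pzRingType) n (W W' : 'M[R]_n) (dl dr : 'rV_n)
    (s t : 'S_n) :
  diag_mx dl *m W *m diag_mx dr = perm_mx s *m W' *m perm_mx t ->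
  forall x y, dl 0 x * W x y * dr 0 y = W' (s x) ((t^-1)%g y).
Proof.
move=> E x y; have := congr1 (fun M : 'M[R]_n => M x y) E.
by rewrite -row_permE -[t]invgK -col_permE mul_mx_diag mul_diag_mx !mxE invgK.
Qed.

Lemma exists_perm_preim_setI (T : finType) (A B : {set T}) (f : {perm T}) :
  (#|T| < #|A| + #|B|)%N -> exists2 z, z \in A & f z \in B.
Proof.
move=> cardAB.
have : (0 < #|A :&: f @^-1: B|)%N.
  have := cardsUI A (f @^-1: B); have := max_card (A :|: f @^-1: B).
  rewrite card_preimset; last exact: perm_inj.
  move=> le_U eq_UI; rewrite -(ltn_add2l #|A :|: f @^-1: B|) eq_UI addn0.
  exact: leq_ltn_trans le_U cardAB.
by case/card_gt0P => z; rewrite !inE => /andP[Az Bfz]; exists z.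
Qed.

Section AssociationScheme.
Variables (n d : nat) (rel : 'I_n -> 'I_n -> 'I_d.+1).
Hypothesis scheme : is_assoc_scheme rel.

Lemma rel_eq0 x y : (rel x y == ord0) = (x == y).
Proof. by case: scheme => _ []. Qed.

Lemma transpose_class i : exists j, forall x y, rel x y = i <-> rel y x = j.
Proof.
case: scheme => class_ne0 [_ [transp _]].
have [j Hj] := transp i; have [j' Hj'] := transp j.
have [x0 [y0 rel_x0y0]] := class_ne0 i.
have j'_i : j' = i by rewrite -rel_x0y0; apply/esym/Hj'/Hj.
by exists j => x y; split; [apply: Hj | rewrite -j'_i; apply: Hj'].
Qed.

Lemma valency_at_const i x x' : valency_at rel i x = valency_at rel i x'.
Proof.
have [j Hj] := transpose_class i; case: scheme => _ [_ [_ pij_const]].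
have valency_pij z : valency_at rel i z = pij rel i j z z.
  rewrite /valency_at /pij; apply: eq_card => y; rewrite !inE.
  by case: eqP => //= /Hj ->; rewrite eqxx.
have rel_diag z : rel z z = ord0 by apply/eqP; rewrite rel_eq0.
by rewrite !valency_pij (pij_const i j ord0 x x x' x') ?rel_diag.
Qed.

Lemma valency_at_gt0 i x : (0 < valency_at rel i x)%N.
Proof.
have [y [z rel_yz]] := scheme.1 i.
by rewrite (valency_at_const i x y); apply/card_gt0P; exists z; rewrite inE rel_yz.
Qed.

Lemma sum_valency_at i x :
  (\sum_(y : 'I_n) valency_at rel i y = n * valency_at rel i x)%N.
Proof.
rewrite (eq_bigr (fun _ => valency_at rel i x)) => [|y _]; last first.
  exact: valency_at_const.
by rewrite sum_nat_const cardE size_enum_ord.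
Qed.

Hypothesis valency_inj : forall (i j : 'I_d.+1) (x : 'I_n), i != j ->
  valency_at rel i x != valency_at rel j x.

Lemma rel_sym x y : rel y x = rel x y.
Proof.
have [j Hj] := transpose_class (rel x y).
suff -> : rel x y = j by apply/Hj.
apply: contraTeq (valency_inj _ _ x) _.
have valencyE i z : valency_at rel i z = (\sum_y (rel z y == i))%N.
  by rewrite /valency_at -sum1_card big_mkcond; apply: eq_bigr => y' _; rewrite inE.
have : (\sum_z valency_at rel (rel x y) z = \sum_z valency_at rel j z)%N.
  rewrite (eq_bigr _ (fun z _ => valencyE _ z)) exchange_big /=.
  apply: eq_bigr => y' _; rewrite valencyE; apply: eq_bigr => x' _.
  by congr nat_of_bool; apply/eqP/eqP => /Hj.
rewrite !(sum_valency_at _ x) => /eqP; rewrite eqn_pmul2l //.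
exact: leq_ltn_trans (leq0n x) (ltn_ord x).
Qed.

Lemma weight_of_col_count (C : eqType) (w : 'I_d.+1 -> C) :
  injective w -> forall u i v,
  #|[set y | w (rel y u) == v]| = valency_at rel i u -> w i = v.
Proof.
move=> w_inj u i v card_v.
case: (pickP (fun j => w j == v)) => [j /eqP w_j | no_v].
  have : #|[set y | w (rel y u) == v]| = valency_at rel j u.
    by apply: eq_card => y; rewrite !inE -w_j (inj_eq w_inj) rel_sym.
  rewrite card_v => /eqP val_ij; apply/eqP; rewrite -w_j (inj_eq w_inj).
  exact: contraLR (valency_inj _ _ u) val_ij.
move: (valency_at_gt0 i u); rewrite -card_v; case/card_gt0P => y.
by rewrite inE no_v.
Qed.

End AssociationScheme.

Arguments rel_eq0 {n d rel}.
Arguments valency_at_const {n d rel}.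
Arguments rel_sym {n d rel}.
Arguments weight_of_col_count {n d rel}.

Section EquivalentWeights.
Variables (C : fieldType) (n d : nat) (rel : 'I_n -> 'I_n -> 'I_d.+1).
Variables (w w' : 'I_d.+1 -> C) (dl dr : 'rV[C]_n) (s t : 'S_n).
Hypothesis scheme : is_assoc_scheme rel.
Hypothesis valency_inj : forall (i j : 'I_d.+1) (x : 'I_n), i != j ->
  valency_at rel i x != valency_at rel j x.
Hypothesis p11_large : forall x y : 'I_n, x != y ->
  (n < 2 * pij rel (inord 1) (inord 1) x y)%N.
Hypotheses (w_inj : injective w) (w'_inj : injective w').
Hypothesis w_neq0 : forall x y, w (rel x y) != 0.
Hypotheses (dl_neq0 : forall x, dl 0 x != 0) (dr_neq0 : forall x, dr 0 x != 0).
Hypothesis entry_eq :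
  forall x y, dl 0 x * w (rel x y) * dr 0 y = w' (rel (s x) (t y)).

Lemma left_diag_const x y : dl 0 x = dl 0 y.
Proof.
have [-> // | ne_xy] := eqVneq x y.
have ne_sxy : s x != s y by rewrite (inj_eq perm_inj).
have [z] : exists2 z, z \in [set z | (rel x z == inord 1) && (rel z y == inord 1)]
    & t z \in [set z | (rel (s x) z == inord 1) && (rel z (s y) == inord 1)].
  have lt_half_sum a b : (n < 2 * a -> n < 2 * b -> n < a + b)%N by lia.
  apply: exists_perm_preim_setI; rewrite card_ord.
  by apply: lt_half_sum; apply: p11_large.
rewrite !inE => /andP[/eqP xz /eqP zy] /andP[/eqP sxtz /eqP tzsy].
have w1_neq0 : w (inord 1) != 0 by rewrite -xz w_neq0.
apply: (mulIf w1_neq0); apply: (mulIf (dr_neq0 z)).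
have := entry_eq x z; have := entry_eq y z.
by rewrite xz sxtz (rel_sym scheme valency_inj z y) zy
  (rel_sym scheme valency_inj (t z) (s y)) tzsy => -> ->.
Qed.

Lemma weights_proportional z i : w' i = dl 0 z * dr 0 z * w i.
Proof.
have scale_neq0 : dl 0 z * dr 0 z != 0 by rewrite mulf_neq0.
apply: (weight_of_col_count scheme valency_inj _ _ w'_inj (t z)).
rewrite (valency_at_const scheme i (t z) z) -(card_preimset _ (@perm_inj _ s)).
apply: eq_card => x; rewrite !inE -entry_eq (left_diag_const x z) mulrAC.
by rewrite (inj_eq (mulfI scale_neq0)) (inj_eq w_inj) (rel_sym scheme valency_inj z x).
Qed.

End EquivalentWeights.

Arguments weights_proportional {C n d rel w w' dl dr s t}.

Theorem lemma5p7 (C : numClosedFieldType) (n d : nat)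
  (rel : 'I_n -> 'I_n -> 'I_d.+1) (w w' : 'I_d.+1 -> C) :
  is_assoc_scheme rel ->
  type_II (bm_elt rel w) -> type_II (bm_elt rel w') ->
  injective w -> injective w' ->
  (forall (i j : 'I_d.+1) (x : 'I_n), i != j ->
     valency_at rel i x != valency_at rel j x) ->
  (forall (i : 'I_d.+1) (x y : 'I_n), i != ord0 -> rel x y = i ->
     (n < 2 * pij rel (inord 1) (inord 1) x y)%N) ->
  type_II_equiv (bm_elt rel w) (bm_elt rel w') ->
  exists c : C, bm_elt rel w = c *: bm_elt rel w'.
Proof.
(* Of the type-II conditions only the nonzero entries of W are needed. *)
move=> scheme [W_neq0 _] _ w_inj w'_inj valency_inj p11_large.
case=> dl [dr [s [t [dl_neq0 [dr_neq0 equiv]]]]].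
have w_neq0 x y : w (rel x y) != 0 by rewrite -bm_eltE.
have entry_eq x y : dl 0 x * w (rel x y) * dr 0 y = w' (rel (s x) ((t^-1)%g y)).
  by rewrite -!bm_eltE; apply: diag_perm_equivE.
have p11_large' x y : x != y -> (n < 2 * pij rel (inord 1) (inord 1) x y)%N.
  by move=> ne_xy; apply: (p11_large (rel x y)); rewrite // (rel_eq0 scheme).
have [z _] := scheme.1 ord0.
exists (dl 0 z * dr 0 z)^-1; apply/matrixP => x y.
rewrite mxE !bm_eltE (weights_proportional scheme valency_inj p11_large' w_inj
  w'_inj w_neq0 dl_neq0 dr_neq0 entry_eq z) mulrA mulVf ?mul1r //.
by rewrite mulf_neq0.
Qed.
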